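(* Let $I=I(G)\subset S$ be an edge ideal with linear quotients with respect to the order $u_1,\dots,u_m$ of its minimal generators, and let $P=(x_{j_1},\dots,x_{j_t})$ with $j_1<\dots<j_t$. Consider the total order on the products $x_{j_1}u_1>\cdots>x_{j_t}u_1>x_{j_1}u_2>\cdots>x_{j_t}u_2>\cdots>x_{j_1}u_m>\cdots>x_{j_t}u_m$. Every $v\in\mathcal{G}(PI)$ equals at least one product $x_{j_p}u_q$; call the largest such product in this order the standard presentation of $v$, and order $\mathcal{G}(PI)$ by declaring $v>v'$ if the standard presentation of $v$ is larger than that of $v'$. Then $PI$ has linear quotients with respect to this order (listed from largest to smallest).
   Context: $S=K[x_1,\dots,x_n]$, $I(G)=(x_ix_j:\{x_i,x_j\}\in E(G))$; $\mathcal{G}(J)$ is the minimal monomial generating set of a monomial ideal $J$. $J$ has linear quotients with respect to an ordering $w_1,\dots,w_s$ of $\mathcal{G}(J)$ if for each $i\ge2$ the colon ideal $(w_1,\dots,w_{i-1}):(w_i)$ is generated by variables. *)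

(* Monomials in S = K[x_0,...,x_{n-1}] are represented by
   their exponent vectors; monomial ideals are handled through their sets of
   monomials (a monomial ideal is determined by the monomials it contains). *)
From mathcomp Require Import all_boot all_order.
Set Implicit Arguments. Unset Strict Implicit. Unset Printing Implicit Defensive.

Definition mon (n : nat) := {ffun 'I_n -> nat}.

Definition var n (i : 'I_n) : mon n := [ffun k => (k == i : nat)].

Definition mmul n (a b : mon n) : mon n := [ffun k => a k + b k].

Definition mdvd n (a b : mon n) : bool := [forall k, a k <= b k].

Definition in_mideal n (gens : seq (mon n)) (m : mon n) : bool :=
  has (fun g => mdvd g m) gens.

Definition mingens n (gens : seq (mon n)) : seq (mon n) :=
  [seq v <- undup gens | ~~ has (fun w => mdvd w v && (w != v)) gens].

Definition colon_mon n (gens : seq (mon n)) (w : mon n) : mon n -> bool :=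
  fun m => in_mideal gens (mmul m w).

Definition gen_by_vars n (J : mon n -> bool) : Prop :=
  exists V : {set 'I_n}, forall m : mon n,
    J m = [exists k in V, 0 < m k].

Definition mon1 n : mon n := [ffun _ => 0].

Definition linear_quotients n (ws : seq (mon n)) : Prop :=
  forall i, 0 < i < size ws ->
    gen_by_vars (colon_mon (take i ws) (nth (mon1 n) ws i)).

Definition edge_mon n (e : rel 'I_n) (u : mon n) : Prop :=
  exists i j, e i j /\ u = mmul (var i) (var j).

(* the products x_{j_1}u_1 > ... > x_{j_t}u_1 > x_{j_1}u_2 > ... > x_{j_t}u_m,
   listed from largest to smallest *)
Definition products n (js : seq 'I_n) (us : seq (mon n)) : seq (mon n) :=
  [seq mmul (var j) u | u <- us, j <- js].

From mathcomp Require Import all_boot all_order.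
From mathcomp Require Import zify.
Set Implicit Arguments. Unset Strict Implicit. Unset Printing Implicit Defensive.

(* All products x_j u have degree 3, so G(PI) is the set of these products,
   and the generators listed before v = x_j0 u are the x_j u' with u' before
   u and the x_j u with j before j0.  A monomial colon ideal (G) : v is
   generated by variables iff every g in G admits a variable x_k with
   v_k < g_k and x_k v in (G).  For g = x_j u take k = j.  For g = x_j u',
   linear quotients of I give k with u_k < u'_k and u'' | x_k u for some u''
   before u; then k works via x_j0 u'' if k <> j0, and j works via x_j u'' if
   v_j < g_j.  In the remaining case u' = x_j0 x_w and u = x_j x_o, so g and v
   differ in one variable and w works. *)

Section Monomials.

Variable n : nat.
Implicit Types (a b c m : mon n) (G : seq (mon n)) (i j k : 'I_n).

Lemma mmulE a b k : mmul a b k = a k + b k.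
Proof. by rewrite ffunE. Qed.

Lemma varE i k : var i k = (k == i).
Proof. by rewrite ffunE. Qed.

Lemma mmulC a b : mmul a b = mmul b a.
Proof. by apply/ffunP => k; rewrite !mmulE addnC. Qed.

Lemma mmulA a b c : mmul a (mmul b c) = mmul (mmul a b) c.
Proof. by apply/ffunP => k; rewrite !mmulE addnA. Qed.

Lemma mmulCA a b c : mmul a (mmul b c) = mmul b (mmul a c).
Proof. by apply/ffunP => k; rewrite !mmulE addnCA. Qed.

Lemma mdvdP a b : reflect (forall k, a k <= b k) (mdvd a b).
Proof. exact: forallP. Qed.

Lemma mdvd_trans b a c : mdvd a b -> mdvd b c -> mdvd a c.
Proof.
by move=> /mdvdP ab /mdvdP bc; apply/mdvdP => k; apply: leq_trans (ab k) (bc k).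
Qed.

Lemma mdvd_mul2l c a b : mdvd a b -> mdvd (mmul c a) (mmul c b).
Proof. by move=> /mdvdP ab; apply/mdvdP => k; rewrite !mmulE leq_add2l. Qed.

Lemma mdvd_mull a b : mdvd b (mmul a b).
Proof. by apply/mdvdP => k; rewrite mmulE leq_addl. Qed.

Lemma in_mideal_mem G g m : g \in G -> mdvd g m -> in_mideal G m.
Proof. by move=> gG gm; apply/hasP; exists g. Qed.

Lemma in_mideal_mdvd G a b : in_mideal G a -> mdvd a b -> in_mideal G b.
Proof. by case/hasP => g gG ga ab; apply/hasP; exists g; last exact: mdvd_trans ab. Qed.

Definition mdeg a := \sum_k a k.

Lemma mdeg_mmul a b : mdeg (mmul a b) = mdeg a + mdeg b.
Proof. by rewrite /mdeg -big_split; apply: eq_bigr => k _; rewrite mmulE. Qed.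

Lemma mdeg_var i : mdeg (var i) = 1.
Proof.
rewrite /mdeg (bigD1 i) //= varE eqxx big1 // => k.
by rewrite varE => /negbTE ->.
Qed.

Lemma mdvd_mdeg_eq a b : mdvd a b -> mdeg a = mdeg b -> a = b.
Proof.
move=> /mdvdP ab eq_deg; apply/ffunP => k; apply/eqP; rewrite eqn_leq ab /=.
have : \sum_k (b k - a k) == 0.
  rewrite -(eqn_add2l (mdeg a)) addn0 {2}eq_deg /mdeg -big_split /=.
  by apply/eqP/eq_bigr => k' _; rewrite subnKC.
by rewrite sum_nat_eq0 => /forallP/(_ k); rewrite subn_eq0.
Qed.

Lemma mem_mingens_homog G d : {in G, forall g, mdeg g = d} -> mingens G =i G.
Proof.
move=> homG g; rewrite mem_filter mem_undup andbC.
case gG: (g \in G) => //=; apply/hasPn => h hG.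
by apply/negP => /andP[hg]; rewrite (mdvd_mdeg_eq hg) ?homG ?eqxx.
Qed.

Lemma mul_var_witness c o w : w != o ->
  mmul c (var o) w < mmul c (var w) w /\
  mdvd (mmul c (var w)) (mmul (var w) (mmul c (var o))).
Proof.
move=> wo; rewrite !mmulE !varE eqxx (negbTE wo) addn0 addn1; split=> //.
by rewrite mmulCA; apply: mdvd_mul2l; rewrite mmulC; apply: mdvd_mull.
Qed.

Lemma mmul_var_factor i y z : 0 < mmul (var y) (var z) i ->
  exists w, mmul (var y) (var z) = mmul (var i) (var w).
Proof.
rewrite mmulE !varE; case: (eqVneq i y) => [-> _| _]; first by exists z.
by case: (eqVneq i z) => [-> _|//]; exists y; rewrite mmulC.
Qed.

End Monomials.

Section Colon.

Variable n : nat.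
Implicit Types (m w : mon n) (G : seq (mon n)).

Lemma colon_gen_by_varsP G w :
  gen_by_vars (colon_mon G w) <->
  {in G, forall g : mon n, exists2 k, w k < g k & in_mideal G (mmul (var k) w)}.
Proof.
split=> [[V colonE] g gG | witness].
  have : colon_mon G w [ffun k => g k - w k].
    apply/hasP; exists g => //; apply/mdvdP => k; rewrite mmulE ffunE.
    by rewrite addnC -leq_subLR.
  rewrite colonE => /existsP[k /andP[kV]]; rewrite ffunE subn_gt0 => ltk.
  exists k => //; rewrite -/(colon_mon G w (var k)) colonE.
  by apply/existsP; exists k; rewrite kV varE eqxx.
exists [set k | in_mideal G (mmul (var k) w)] => m; apply/idP/idP.
  case/hasP => g gG /mdvdP gm; have [k ltk kin] := witness g gG.
  apply/existsP; exists k; rewrite inE kin /=.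
  by move: (gm k); rewrite mmulE; lia.
case/existsP => k /andP[]; rewrite inE => kin mk; apply: in_mideal_mdvd kin _.
by apply/mdvdP => k'; rewrite !mmulE varE; case: eqP => [->|_]; rewrite leq_add2r.
Qed.

Lemma eq_colon_gen_by_vars G G' w :
  G =i G' -> gen_by_vars (colon_mon G w) -> gen_by_vars (colon_mon G' w).
Proof.
move=> eqG [V colonE]; exists V => m.
by rewrite -colonE /colon_mon /in_mideal (eq_has_r eqG).
Qed.

End Colon.

Lemma take_sorted_index (T : eqType) (x0 : T) (s t : seq T) i :
  s =i t -> sorted (fun x y => index x t < index y t) s -> i < size s ->
  take i s =i take (index (nth x0 s i) t) t.
Proof.
move=> st sorted_s lti x.
have tr : transitive (fun x y => index x t < index y t) by move=> ? ? ?; apply: ltn_trans.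
have mono := leqW_mono_in (leq_mono_in (sorted_ltn_nth tr x0 sorted_s)).
have [xs|xNs] := boolP (x \in s); last first.
  by apply/idP/idP => /mem_take; rewrite -?st => xs; rewrite xs in xNs.
by rewrite !in_take -?st // -{2}(nth_index x0 xs) mono // inE index_mem.
Qed.

Section Products.

Variable n : nat.
Implicit Types (u g : mon n) (us : seq (mon n)) (js : seq 'I_n).

Definition quadratic u := exists y z, u = mmul (var y) (var z).

Lemma mem_products js us (j : 'I_n) u :
  j \in js -> u \in us -> mmul (var j) u \in products js us.
Proof. by move=> j_js u_us; apply: (allpairs_f (fun u j => mmul (var j) u)). Qed.

Lemma products_prefix js us q : q < size (products js us) ->
  exists us1 u us2 js1 j0 js2,
    [/\ us = us1 ++ u :: us2, js = js1 ++ j0 :: js2,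
        take q (products js us) = products js us1 ++ [seq mmul (var j) u | j <- js1]
      & nth (mon1 n) (products js us) q = mmul (var j0) u].
Proof.
elim: us q => [//|u us IHus] q.
rewrite /products allpairs_cons -/(products js us) size_cat size_map.
case: (ltnP q (size js)) => [ltq _ | le_q ltq].
  case Ed: (drop q js) => [|j0 js2].
    by move/eqP: Ed; rewrite -size_eq0 size_drop subn_eq0 leqNgt ltq.
  exists [::], u, us, (take q js), j0, js2; split=> //.
  - by rewrite -Ed cat_take_drop.
  - by rewrite take_cat size_map ltq map_take.
  - by rewrite nth_cat size_map ltq (nth_map j0) // -[q]addn0 -nth_drop Ed.
have ltq' : q - size js < size (products js us) by rewrite ltn_subLR.
have [us1 [u1 [us2 [js1 [j0 [js2 [Eus Ejs prefix nthE]]]]]]] := IHus _ ltq'.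
exists (u :: us1), u1, us2, js1, j0, js2; split=> //; first by rewrite Eus.
  by rewrite take_cat size_map ltnNge le_q /= prefix catA.
by rewrite nth_cat size_map ltnNge le_q.
Qed.

Lemma quadratic_swap_witness u u' (j j0 : 'I_n) :
  quadratic u -> quadratic u' -> u j0 < u' j0 ->
  mmul (var j) u' j <= mmul (var j0) u j -> mmul (var j) u' != mmul (var j0) u ->
  exists2 w, mmul (var j0) u w < mmul (var j) u' w &
             mdvd (mmul (var j) u') (mmul (var w) (mmul (var j0) u)).
Proof.
move=> [y [z ->]] [a [b ->]] lt_j0 le_j ne.
have [w Eab] := mmul_var_factor (leq_ltn_trans (leq0n _) lt_j0).
rewrite Eab in lt_j0 le_j ne *.
have jj0 : j != j0.
  apply: contraTneq (le_j) => ->.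
  by rewrite -ltnNge 2!(mmulE (var j0)) ltn_add2l; exact: lt_j0.
have [o Eyz] : exists o, mmul (var y) (var z) = mmul (var j) (var o).
  apply: mmul_var_factor; apply: leq_trans (leq_addr (mmul (var j0) (var w) j) 1) _.
  by move: le_j; rewrite !mmulE !varE eqxx (negbTE jj0).
rewrite Eyz [mmul (var j0) (mmul (var j) _)]mmulCA !(mmulA (var j) (var j0)) in ne *.
have wo : w != o by apply: contra ne => /eqP ->.
by have [lt dv] := mul_var_witness (mmul (var j) (var j0)) wo; exists w.
Qed.

Lemma products_prefix_colon js js1 us1 u (j0 : 'I_n) :
  {in us1, forall u', quadratic u'} -> quadratic u -> j0 \in js ->
  {in us1, forall u', exists2 k, u k < u' k & in_mideal us1 (mmul (var k) u)} ->
  let E := products js us1 ++ [seq mmul (var j) u | j <- js1] in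
  mmul (var j0) u \notin E ->
  {in E, forall g, exists2 k, mmul (var j0) u k < g k &
                              in_mideal E (mmul (var k) (mmul (var j0) u))}.
Proof.
move=> quad_us1 quad_u j0_js lq_u E vNE g gE.
have gv : g != mmul (var j0) u by apply: contraNneq vNE => <-.
have E_products l u'' : l \in js -> u'' \in us1 -> mmul (var l) u'' \in E.
  by move=> l_js u''_us1; rewrite mem_cat mem_products.
move: gE gv; rewrite mem_cat.
case/orP=> [/allpairsP[[u' j] /= [u'_us1 j_js ->]] | /mapP[j j_js1 ->]] gv.
  have [k lt_k /hasP[u'' u''_us1 dvd_u'']] := lq_u u' u'_us1.
  case: (eqVneq k j0) lt_k dvd_u'' => [-> | kNj0] lt_k dvd_u''.
    case: (ltnP (mmul (var j0) u j) (mmul (var j) u' j)) => [lt_j | le_j].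
      exists j => //; apply: in_mideal_mem (E_products _ _ j_js u''_us1) _.
      exact: mdvd_mul2l.
    have [w lt_w dvd_w] := quadratic_swap_witness quad_u (quad_us1 _ u'_us1) lt_k le_j gv.
    exists w => //; apply: in_mideal_mem dvd_w.
    by rewrite mem_cat mem_products.
  exists k.
    by rewrite mmulE varE (negbTE kNj0) (leq_trans lt_k) // mmulE leq_addl.
  apply: in_mideal_mem (E_products _ _ j0_js u''_us1) _.
  by rewrite mmulCA; apply: mdvd_mul2l.
have jj0 : j != j0 by apply: contra gv => /eqP ->.
have [lt_j dvd_j] := mul_var_witness u jj0.
exists j; rewrite ![mmul (var _) u]mmulC //.
apply: in_mideal_mem dvd_j.
by rewrite mmulC mem_cat (map_f (fun l => mmul (var l) u)) ?orbT.
Qed.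

End Products.

Theorem mainTheorem11 (n : nat) (e : rel 'I_n)
    (e_sym : symmetric e) (e_irr : irreflexive e)
    (us : seq (mon n))
    (us_uniq : uniq us)
    (us_gens : forall u, u \in us <-> edge_mon e u)
    (us_lq : linear_quotients us)
    (js : seq 'I_n) (js_sorted : sorted (fun a b : 'I_n => a < b) js)
    (ws : seq (mon n))
    (ws_gens : perm_eq ws (mingens (products js us)))
    (ws_order : sorted (fun v v' => index v (products js us) < index v' (products js us)) ws) :
  linear_quotients ws.
Proof.
move=> i /andP[_ lti]; set pr := products js us in ws_gens ws_order *.
have quad_us : {in us, forall u, quadratic u}.
  by move=> u /us_gens[y [z [_ ->]]]; exists y, z.
have ws_pr : ws =i pr.
  move=> v; rewrite (perm_mem ws_gens) (@mem_mingens_homog _ _ 3) //.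
  move=> _ /allpairsP[[u j] /= [u_us _ ->]].
  have [y [z ->]] := quad_us u u_us.
  by rewrite !mdeg_mmul !mdeg_var.
set v := nth (mon1 n) ws i.
have v_pr : v \in pr by rewrite -ws_pr mem_nth.
have lt_v : index v pr < size pr by rewrite index_mem.
have [us1 [u [us2 [js1 [j0 [js2 [Eus Ejs prefix nth_v]]]]]]] := products_prefix lt_v.
rewrite nth_index // in nth_v.
apply: (@eq_colon_gen_by_vars _ (take (index v pr) pr)).
  by move=> g; rewrite (take_sorted_index (mon1 n) ws_pr ws_order lti).
rewrite prefix nth_v; apply/colon_gen_by_varsP/products_prefix_colon.
- by move=> u' u'_us1; apply: quad_us; rewrite Eus mem_cat u'_us1.
- by apply: quad_us; rewrite Eus mem_cat mem_head orbT.
- by rewrite Ejs mem_cat mem_head orbT.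
- have [-> //|us1_neq_nil] := eqVneq us1 [::].
  apply/colon_gen_by_varsP; have := us_lq (size us1).
  rewrite Eus take_size_cat // nth_cat ltnn subnn; apply.
  by rewrite size_cat /= lt0n size_eq0 us1_neq_nil -addSnnS leq_addr.
- by rewrite -prefix -nth_v in_take // ltnn.
Qed.
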